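(* Let $k\ge 2$ and let $\mathbf{A}$ be an algebra with a $0$-pointed or $1$-pointed $k$-cube term such that $\mathbf{A}^k$ is finitely generated. Then $d_{\mathbf{A}}(n)\in O(n^{k-1})$.
   Context: An algebra $\mathbf{A}$ has a $p$-pointed $k$-cube term if there is a term $F(x_1,\dots,x_m)$ in the language of $\mathbf{A}$ and a $k\times m$ matrix $M=[y_{i,j}]$ whose entries are variables and constant symbols (nullary operation symbols of the language), exactly $p$ distinct constant symbols occurring, such that every column of $M$ contains an entry different from the variable $x$ and the identities $F(y_{i,1},\dots,y_{i,m})\approx x$, $i=1,\dots,k$, hold in $\mathbf{A}$. $d_{\mathbf{A}}(n)$ is the least size of a generating set of $\mathbf{A}^n$. *)

From mathcomp Require Import all_boot.
From Stdlib Require Import List.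
Set Implicit Arguments.
Unset Strict Implicit.
Unset Printing Implicit Defensive.

(* A signature: operation symbols Fs with (finite) arities ar.
   An algebra of that signature: a carrier A with interpretations op. *)

Inductive term (Fs : Type) (ar : Fs -> nat) (V : Type) : Type :=
| Var : V -> term ar V
| App : forall f : Fs, ('I_(ar f) -> term ar V) -> term ar V.

Fixpoint eval (Fs : Type) (ar : Fs -> nat) (A : Type)
  (op : forall f : Fs, ('I_(ar f) -> A) -> A) (V : Type) (v : V -> A)
  (t : term ar V) : A :=
  match t with
  | Var x => v x
  | App f ts => op f (fun i => eval op v (ts i))
  end.

Definition empty_ord_fun (n : nat) (H : n == 0) (A : Type) : 'I_n -> A.
Proof. move=> i; exfalso; move/eqP: H i => -> [] //. Defined.

Definition const_sym (Fs : Type) (ar : Fs -> nat) := {c : Fs | ar c == 0}.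

(* Entries of the matrix M: a variable (x is variable 0) or a constant symbol. *)
Definition entry (Fs : Type) (ar : Fs -> nat) := (nat + const_sym ar)%type.

Definition eval_entry (Fs : Type) (ar : Fs -> nat) (A : Type)
  (op : forall f : Fs, ('I_(ar f) -> A) -> A) (v : nat -> A) (e : entry ar) : A :=
  match e with
  | inl j => v j
  | inr c => op (proj1_sig c) (empty_ord_fun (proj2_sig c) A)
  end.

(* A has a p-pointed k-cube term: a term F(x_1,...,x_m) and a k x m matrix M
   of variables and constant symbols, exactly p distinct constant symbols
   occurring in M, every column containing an entry different from the
   variable x (= variable 0), and A satisfying F(row_i of M) = x for all i. *)
Definition has_pointed_cube_term (Fs : Type) (ar : Fs -> nat) (A : Type)
  (op : forall f : Fs, ('I_(ar f) -> A) -> A) (p k : nat) : Prop :=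
  exists (m : nat) (F : term ar 'I_m) (M : 'I_k -> 'I_m -> entry ar),
    (exists cs : list Fs, length cs = p /\ NoDup cs /\
       (forall c : Fs, In c cs <->
          exists (i : 'I_k) (j : 'I_m) (Hc : ar c == 0),
            M i j = inr (exist _ c Hc))) /\
    (forall j : 'I_m, exists i : 'I_k, M i j <> inl 0%N) /\
    (forall (i : 'I_k) (v : nat -> A),
        eval op (fun j => eval_entry op v (M i j)) F = v 0%N).

Definition closed_power (Fs : Type) (ar : Fs -> nat) (A : Type)
  (op : forall f : Fs, ('I_(ar f) -> A) -> A) (n : nat)
  (B : ('I_n -> A) -> Prop) : Prop :=
  forall (f : Fs) (a : 'I_(ar f) -> ('I_n -> A)),
    (forall j, B (a j)) -> B (fun i => op f (fun j => a j i)).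

Definition generates_power (Fs : Type) (ar : Fs -> nat) (A : Type)
  (op : forall f : Fs, ('I_(ar f) -> A) -> A) (n m : nat)
  (g : 'I_m -> ('I_n -> A)) : Prop :=
  forall B : ('I_n -> A) -> Prop,
    closed_power op B -> (forall l, B (g l)) -> forall x, B x.

(* d_A(n) <= b : A^n has a generating set with at most b elements. *)
Definition d_le (Fs : Type) (ar : Fs -> nat) (A : Type)
  (op : forall f : Fs, ('I_(ar f) -> A) -> A) (n b : nat) : Prop :=
  exists (m : nat) (g : 'I_m -> ('I_n -> A)), m <= b /\ generates_power op g.

Definition power_fin_gen (Fs : Type) (ar : Fs -> nat) (A : Type)
  (op : forall f : Fs, ('I_(ar f) -> A) -> A) (n : nat) : Prop :=
  exists (m : nat) (g : 'I_m -> ('I_n -> A)), generates_power op g.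

From mathcomp Require Import all_boot.
From Stdlib Require Import FunctionalExtensionality.
Set Implicit Arguments.
Unset Strict Implicit.
Unset Printing Implicit Defensive.

(* Fix an element e such that, once every variable other than x is set to e,
   each entry of the cube matrix other than x evaluates to e: any e works for a
   0-pointed cube term, the value of the constant for a 1-pointed one.  If a
   tuple a of A^n differs from e on a set T of at least k coordinates, send the
   first k - 1 coordinates of T to the first k - 1 rows of the matrix and all
   other coordinates to the last row, and evaluate each column at (a_d, e, e,
   ...) in coordinate d.  Applying the cube term to these column tuples gives back a,
   and a column whose entry in row i is not x makes its tuple equal to e on the
   coordinates sent to row i, so each of them differs from e on a proper subset
   of T.  Hence A^n is generated by the tuples differing from e in at most k - 1
   coordinates; each of these is w o pi for some w in A^k and one of n^(k-1)
   maps pi : n -> k, so a generating set of A^k of size m yields one of A^n of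
   size m * n^(k-1). *)

Section PointedCubeTerms.

Variables (Fs : Type) (ar : Fs -> nat) (A : Type).
Variable op : forall f : Fs, ('I_(ar f) -> A) -> A.

Lemma closed_power_eval n (B : ('I_n -> A) -> Prop) m (t : 'I_m -> 'I_n -> A)
    (F : term ar 'I_m) :
  closed_power op B -> (forall j, B (t j)) -> B (fun d => eval op (fun j => t j d) F).
Proof.
move=> hB ht; elim: F => [x|f ts IH] /=; first exact: ht.
exact: (hB f (fun i d => eval op (fun j => t j d) (ts i)) IH).
Qed.

Lemma closed_power_comap n p (pi : 'I_n -> 'I_p) (B : ('I_n -> A) -> Prop) :
  closed_power op B -> closed_power op (fun w => B (w \o pi)).
Proof. by move=> hB f a; apply: (hB f (fun j => a j \o pi)). Qed.

Lemma generates_power_comap n p m (g : 'I_m -> 'I_p -> A) (pi : 'I_n -> 'I_p)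
    (B : ('I_n -> A) -> Prop) :
  generates_power op g -> closed_power op B -> (forall l, B (g l \o pi)) ->
  forall w, B (w \o pi).
Proof. by move=> hg hB; apply: (hg (fun w => B (w \o pi))); apply: closed_power_comap. Qed.

Definition equal_off n (e : A) (a : 'I_n -> A) (T : {set 'I_n}) :=
  forall d, d \notin T -> a d = e.

Definition collapse n k (s : 'I_k -> 'I_n) (d : 'I_n) : 'I_k.+1 :=
  if [pick i | s i == d] is Some i then lift ord_max i else ord_max.

Lemma factor_through_collapse n k (s : 'I_k -> 'I_n) e (a : 'I_n -> A) :
  (forall d, (forall i, s i != d) -> a d = e) ->
  a = (fun i => if unlift ord_max i is Some i' then a (s i') else e) \o collapse s.
Proof.
move=> ha; apply: functional_extensionality => d /=.
rewrite /collapse; case: pickP => [i /eqP <-|hs]; first by rewrite liftK.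
by rewrite unlift_none ha // => i; rewrite hs.
Qed.

Lemma small_support_closed n k m (g : 'I_m -> 'I_k.+1 -> A)
    (B : ('I_n.+1 -> A) -> Prop) e (T : {set 'I_n.+1}) (a : 'I_n.+1 -> A) :
  generates_power op g -> closed_power op B ->
  (forall l (s : {ffun 'I_k -> 'I_n.+1}), B (g l \o collapse s)) ->
  #|T| <= k -> equal_off e a T -> B a.
Proof.
move=> hg hB hgB hT ha.
pose s := [ffun i : 'I_k => nth ord0 (enum T) i].
rewrite (@factor_through_collapse _ _ s e a); first exact: generates_power_comap (hgB ^~ s) _.
move=> d hs; apply: ha; apply/negP => dT.
have lt_dk : index d (enum T) < k by apply: leq_trans hT; rewrite cardE index_mem mem_enum.
by move/eqP: (hs (Ordinal lt_dk)); rewrite ffunE nth_index ?mem_enum.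
Qed.

Definition absorbing_entries k m (M : 'I_k -> 'I_m -> entry ar) (e : A) :=
  forall i j (v : nat -> A), M i j <> inl 0 ->
    (forall j', j' <> 0 -> v j' = e) -> eval_entry op v (M i j) = e.

Definition absorbing_cube_term k (e : A) :=
  exists m (F : term ar 'I_m) (M : 'I_k -> 'I_m -> entry ar),
    [/\ forall j, exists i, M i j <> inl 0,
        forall i (v : nat -> A), eval op (fun j => eval_entry op v (M i j)) F = v 0
      & absorbing_entries M e].

Lemma cube_term0_absorbing k :
  has_pointed_cube_term op 0 k -> forall e, absorbing_cube_term k e.
Proof.
move=> [m [F [M [[cs [hlen [_ hcs]]] [hcol hid]]]]] e.
case: cs hlen hcs => // _ hcs.
exists m, F, M; split=> // i j v hx hv; case E: (M i j) hx => [[|j']|[c hc]] //= _.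
- exact: hv.
- by have [] : List.In c [::] by apply/hcs; exists i, j, hc.
Qed.

Lemma cube_term1_absorbing k :
  has_pointed_cube_term op 1 k -> exists e, absorbing_cube_term k e.
Proof.
move=> [m [F [M [[cs [hlen [_ hcs]]] [hcol hid]]]]].
case: cs hlen hcs => [|c0 [|? ?]] // _ hcs.
have [_ [_ [hc0 _]]] := proj1 (hcs c0) (or_introl erefl).
exists (@op c0 (empty_ord_fun hc0 A)), m, F, M; split=> // i j v hx hv.
case E: (M i j) hx => [[|j']|[c hc]] //= _; first exact: hv.
have [ec|[]] : List.In c [:: c0] by apply/hcs; exists i, j, hc.
by subst c; rewrite (eq_irrelevance hc hc0).
Qed.

Section CubeTermReduction.

Variables (k m : nat) (F : term ar 'I_m) (M : 'I_k.+1 -> 'I_m -> entry ar) (e : A).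
Hypothesis cube_col : forall j, exists i, M i j <> inl 0.
Hypothesis cube_id :
  forall i (v : nat -> A), eval op (fun j => eval_entry op v (M i j)) F = v 0.
Hypothesis cube_absorbing : absorbing_entries M e.

Variable n : nat.

Definition row_of (T : {set 'I_n}) (d : 'I_n) : 'I_k.+1 :=
  inord (minn (index d (enum T)) k).

Lemma row_of_nth (T : {set 'I_n}) d0 (i : 'I_k.+1) :
  i < #|T| -> row_of T (nth d0 (enum T) i) = i.
Proof.
move=> iT; apply: val_inj; rewrite /row_of index_uniq ?enum_uniq -?cardE //.
by rewrite /= (minn_idPl (leq_ord i)) inordK.
Qed.

Lemma cube_term_decompose (T : {set 'I_n}) (a : 'I_n -> A) :
  k < #|T| -> equal_off e a T ->
  exists t : 'I_m -> 'I_n -> A,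
    (forall j, exists2 T' : {set 'I_n}, T' \proper T & equal_off e (t j) T') /\
    a = (fun d => eval op (fun j => t j d) F).
Proof.
move=> hT ha; have [d0 _] : exists d0, d0 \in T by apply/card_gt0P; apply: leq_ltn_trans hT.
pose v d (j : nat) := if j == 0 then a d else e.
have hv d j' : j' <> 0 -> v d j' = e by move/eqP/negbTE; rewrite /v => ->.
exists (fun j d => eval_entry op (v d) (M (row_of T d) j)); split; last first.
  by apply: functional_extensionality => d; rewrite cube_id.
move=> j; have [i0 hi0] := cube_col j.
exists [set d in T | row_of T d != i0].
  have i0T : i0 < #|T| := leq_trans (ltn_ord i0) hT.
  apply/properP; split; first by apply/subsetP => d; rewrite inE => /andP[].
  exists (nth d0 (enum T) i0); first by rewrite -mem_enum mem_nth -?cardE.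
  by rewrite inE row_of_nth ?eqxx ?andbF.
move=> d; have absorb i : M i j <> inl 0 -> eval_entry op (v d) (M i j) = e.
  by move=> hx; apply: cube_absorbing hx (hv d).
rewrite inE negb_and negbK => /orP[dT|/eqP->]; last exact: absorb.
case E: (M (row_of T d) j) => [[|j']|c]; first by rewrite /= /v ha.
all: by rewrite -E; apply: absorb; rewrite E.
Qed.

Lemma cube_term_reduce (B : ('I_n -> A) -> Prop) :
  closed_power op B ->
  (forall (T : {set 'I_n}) a, #|T| <= k -> equal_off e a T -> B a) ->
  forall a, B a.
Proof.
move=> hB hsmall.
suff h N (T : {set 'I_n}) a : #|T| < N -> equal_off e a T -> B a.
  by move=> a; apply: (h _ setT) => // d; rewrite in_setT.
elim: N T a => // N IH T a hT ha.
case: (leqP #|T| k) => hTk; first exact: hsmall hTk ha.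
have [t [ht ->]] := cube_term_decompose hTk ha.
apply: closed_power_eval hB _ => j; have [T' hT' ht'] := ht j.
exact: IH (leq_trans (proper_card hT') hT) ht'.
Qed.

End CubeTermReduction.

(* A may be empty: e is only needed once a tuple of A^n is at hand. *)
Lemma absorbing_cube_term_d_le k m (g : 'I_m -> 'I_k.+1 -> A) n :
  (A -> exists e, absorbing_cube_term k.+1 e) -> generates_power op g ->
  d_le op n.+1 (m * n.+1 ^ k).
Proof.
move=> habs hg.
pose I := ('I_m * {ffun 'I_k -> 'I_n.+1})%type.
exists #|{: I}|, (fun p : 'I_#|{: I}| => let: (l, s) := enum_val p in g l \o collapse s); split.
  by rewrite card_prod card_ffun !card_ord.
move=> B hB hgB a.
have [e [m' [F [M [hcol hid habsM]]]]] := habs (a ord0).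
apply: (cube_term_reduce hcol hid habsM hB) => T b hT hb.
apply: small_support_closed hg hB _ hT hb => l s.
by have := hgB (enum_rank (l, s)); rewrite enum_rankK.
Qed.

End PointedCubeTerms.

Theorem corollary5p6 (Fs : Type) (ar : Fs -> nat) (A : Type)
  (op : forall f : Fs, ('I_(ar f) -> A) -> A) (k : nat) :
  2 <= k ->
  (has_pointed_cube_term op 0 k \/ has_pointed_cube_term op 1 k) ->
  power_fin_gen op k ->
  exists C N : nat, forall n : nat, N <= n -> d_le op n (C * n ^ (k - 1)).
Proof.
case: k => [|[|k]] // _ hcube [m [g hg]].
have habs : A -> exists e, absorbing_cube_term op k.+2 e.
  case: hcube => [/cube_term0_absorbing h e | /cube_term1_absorbing h _] //.
  by exists e.
exists m, 1 => -[|n] // _.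
by rewrite subn1; exact: absorbing_cube_term_d_le habs hg.
Qed.
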